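(* The critical push-pull network (i.e. the push-pull network with $\lambda_1=\mu_1$ and $\lambda_2=\mu_2$) is non-stabilizable: there is no deterministic stationary non-idling policy under which the associated Markov jump process has a positive recurrent class that is entered with probability $1$.
   Context: The push-pull network has two servers and two job streams $i=1,2$, with strictly positive rates $\lambda_1,\lambda_2,\mu_1,\mu_2$. The state is $(x_1,x_2)\in\mathcal{S}=\mathbb{Z}_+^2$, where $x_i$ is the number of jobs in queue $i$. Server 1 can either ''push'' on stream 1 (an operation completing at exponential rate $\lambda_1$ and adding one job to queue 1) or ''pull'' from queue 2 (completing at exponential rate $\mu_2$ and removing one job from queue 2; allowed only if $x_2>0$). Server 2 can either ''push'' on stream 2 (rate $\lambda_2$, adds a job to queue 2) or ''pull'' from queue 1 (rate $\mu_1$, removes a job from queue 1; allowed only if $x_1>0$). Pushing is always possible. Operation durations are exponential, preemption is allowed, and durations are not known at commencement. A (deterministic, stationary) non-idling policy is a function $\mathcal{P}:\mathcal{S}\to\{\text{push},\text{pull}\}^2$ giving the actions of (server 1, server 2), with $\mathcal{P}((x,0))\in\{\text{push}\}\times\{\text{push},\text{pull}\}$ and $\mathcal{P}((0,x))\in\{\text{push},\text{pull}\}\times\{\text{push}\}$ for all integers $x\ge 0$. Given $\mathcal{P}$, in state $(x_1,x_2)$ the two active operations run simultaneously at their respective exponential rates and the state jumps according to whichever completes first; this defines a Markov jump process on $\mathcal{S}$. The network controlled by $\mathcal{P}$ is stable if this Markov jump process has a positive recurrent class which the process enters with probability 1; the network is stabilizable if some non-idling policy makes it stable, and non-stabilizable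 otherwise. *)

From Stdlib Require Import Reals Relations ClassicalDescription.
Open Scope R_scope.

Inductive action := Push | Pull.

Definition state := (nat * nat)%type.

Record network := mkNet { lam1 : R; lam2 : R; mu1 : R; mu2 : R }.

Definition policy := state -> action * action.

(** Non-idling: server 1 cannot pull from an empty queue 2,
    server 2 cannot pull from an empty queue 1. *)
Definition non_idling (P : policy) : Prop :=
  forall x : nat, fst (P (x, 0%nat)) = Push /\ snd (P (0%nat, x)) = Push.

Definition target1 (P : policy) (x : state) : state :=
  match fst (P x) with
  | Push => (S (fst x), snd x)
  | Pull => (fst x, Nat.pred (snd x))
  end.
Definition rate1 (N : network) (P : policy) (x : state) : R :=
  match fst (P x) with Push => lam1 N | Pull => mu2 N end.

Definition target2 (P : policy) (x : state) : state :=
  match snd (P x) with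
  | Push => (fst x, S (snd x))
  | Pull => (Nat.pred (fst x), snd x)
  end.
Definition rate2 (N : network) (P : policy) (x : state) : R :=
  match snd (P x) with Push => lam2 N | Pull => mu1 N end.

(** Total jump rate out of x, and jump-chain transition probabilities
    (the two targets are always distinct states different from x). *)
Definition qout (N : network) (P : policy) (x : state) : R :=
  rate1 N P x + rate2 N P x.
Definition p1 N P x := rate1 N P x / qout N P x.
Definition p2 N P x := rate2 N P x / qout N P x.

Definition step (P : policy) (x y : state) : Prop :=
  y = target1 P x \/ y = target2 P x.
Definition leads (P : policy) : relation state := clos_refl_trans state (step P).
Definition comm_class (P : policy) (x : state) : state -> Prop :=
  fun y => leads P x y /\ leads P y x.

Fixpoint hit_within (N : network) (P : policy) (C : state -> Prop)
    (n : nat) (y : state) : R :=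
  if excluded_middle_informative (C y) then 1 else
  match n with
  | O => 0
  | S n' => p1 N P y * hit_within N P C n' (target1 P y)
          + p2 N P y * hit_within N P C n' (target2 P y)
  end.

Definition enters_as (N : network) (P : policy) (C : state -> Prop) (y : state) : Prop :=
  Un_cv (fun n => hit_within N P C n y) 1.

Definition state_eqb (a b : state) : bool :=
  Nat.eqb (fst a) (fst b) && Nat.eqb (snd a) (snd b).

(** ret_trunc N P x n y = E_y[ sum_{k < min(n, tau_x)} 1 / q(Y_k) ],
    where Y is the jump chain and tau_x the first jump index >= 1 at which
    Y visits x: the expected time (of the jump process) spent before
    returning to x, truncated at n jumps. *)
Fixpoint ret_trunc (N : network) (P : policy) (x : state)
    (n : nat) (y : state) : R :=
  match n with
  | O => 0
  | S n' => / qout N P y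
      + (if state_eqb (target1 P y) x then 0
         else p1 N P y * ret_trunc N P x n' (target1 P y))
      + (if state_eqb (target2 P y) x then 0
         else p2 N P y * ret_trunc N P x n' (target2 P y))
  end.

(** x is positive recurrent: the expected return time to x,
    lim_n ret_trunc N P x n x (a nondecreasing limit), is finite. *)
Definition positive_recurrent (N : network) (P : policy) (x : state) : Prop :=
  exists M : R, forall n : nat, ret_trunc N P x n x <= M.

Definition stable (N : network) (P : policy) : Prop :=
  exists x : state,
    (forall y, comm_class P x y -> positive_recurrent N P y) /\
    (forall y, enters_as N P (comm_class P x) y).

Definition stabilizable (N : network) : Prop :=
  exists P : policy, non_idling P /\ stable N P.

From Stdlib Require Import Reals Lra Lia Relations.
Open Scope R_scope.

(* In the critical network the potential f(y) = y1/lambda1 - y2/lambda2 is a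
   martingale for the jump chain under every non-idling policy: each operation
   moves f by plus or minus the reciprocal of its rate, with probability
   proportional to that rate.  Its increments are bounded, and its conditional
   variance is comparable to the mean holding time 1/q.  So if a state x were
   positive recurrent, the expected quadratic variation A_n of f accumulated
   before the return to x would stay bounded, and so would n P(tau > n).  But
   by optional stopping, excursions still alive after m steps sit within
   distance m d of f(x) and must bring f back to f(x), which costs quadratic
   variation: A_(m+k) >= 2 A_m - (m d)^2 P(tau > m + k).  Letting k grow, A
   increases by at least A_1/2 at every round, a contradiction. *)

Lemma state_eqb_true a b : state_eqb a b = true -> a = b.
Proof.
  destruct a as [a1 a2], b as [b1 b2]; unfold state_eqb; simpl.
  intros [H1 H2]%andb_prop.
  apply Nat.eqb_eq in H1; apply Nat.eqb_eq in H2; subst; reflexivity.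
Qed.

Section KilledChain.
Variables (N : network) (P : policy) (x : state).

Definition one_step (g : state -> R) (y : state) : R :=
  p1 N P y * g (target1 P y) + p2 N P y * g (target2 P y).

Definition kill (g : state -> R) (y : state) : R :=
  (if state_eqb (target1 P y) x then 0 else p1 N P y * g (target1 P y))
  + (if state_eqb (target2 P y) x then 0 else p2 N P y * g (target2 P y)).

Fixpoint kill_iter (n : nat) (g : state -> R) (y : state) : R :=
  match n with O => g y | S n' => kill (kill_iter n' g) y end.

Fixpoint kill_sum (h : state -> R) (n : nat) (y : state) : R :=
  match n with O => 0 | S n' => h y + kill (kill_sum h n') y end.

Definition survival (n : nat) : state -> R := kill_iter n (fun _ => 1).

Lemma ret_trunc_kill_sum n y :
  ret_trunc N P x n y = kill_sum (fun z => / qout N P z) n y.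
Proof.
  revert y; induction n as [|n IH]; intro y; simpl; auto.
  unfold kill; rewrite !IH; ring.
Qed.

Lemma kill_ext g h y : (forall z, g z = h z) -> kill g y = kill h y.
Proof. intro H; unfold kill; rewrite !H; reflexivity. Qed.

Lemma kill_add g h y : kill (fun z => g z + h z) y = kill g y + kill h y.
Proof. unfold kill; destruct state_eqb, state_eqb; ring. Qed.

Lemma kill_scal a g y : kill (fun z => a * g z) y = a * kill g y.
Proof. unfold kill; destruct state_eqb, state_eqb; ring. Qed.

Lemma kill_iter_ext n g h y :
  (forall z, g z = h z) -> kill_iter n g y = kill_iter n h y.
Proof.
  revert y; induction n; intros y H; simpl; auto.
  apply kill_ext; auto.
Qed.

Lemma kill_iter_add n g h y :
  kill_iter n (fun z => g z + h z) y = kill_iter n g y + kill_iter n h y.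
Proof.
  revert y; induction n; intro y; simpl; auto.
  rewrite <- kill_add; apply kill_ext; auto.
Qed.

Lemma kill_iter_scal n a g y :
  kill_iter n (fun z => a * g z) y = a * kill_iter n g y.
Proof.
  revert y; induction n; intro y; simpl; auto.
  rewrite <- kill_scal; apply kill_ext; auto.
Qed.

Lemma kill_iter_add_n m k g y :
  kill_iter m (kill_iter k g) y = kill_iter (m + k) g y.
Proof.
  revert y; induction m; intro y; simpl; auto.
  apply kill_ext; auto.
Qed.

Lemma kill_sum_add_n m k h y :
  kill_sum h (m + k) y = kill_sum h m y + kill_iter m (kill_sum h k) y.
Proof.
  revert y; induction m; intro y; simpl; [lra|].
  rewrite (kill_ext _ (fun z => kill_sum h m z + kill_iter m (kill_sum h k) z))
    by auto.
  rewrite kill_add; ring.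
Qed.

Lemma kill_sum_S n h y : kill_sum h (S n) y = kill_sum h n y + kill_iter n h y.
Proof.
  rewrite <- Nat.add_1_r, kill_sum_add_n; f_equal.
  apply kill_iter_ext; intro z; simpl; unfold kill.
  destruct state_eqb, state_eqb; ring.
Qed.

Lemma kill_sum_scal n a h y :
  kill_sum (fun z => a * h z) n y = a * kill_sum h n y.
Proof.
  revert y; induction n; intro y; simpl; [ring|].
  rewrite (kill_ext _ (fun z => a * kill_sum h n z)) by auto.
  rewrite kill_scal; ring.
Qed.

Hypothesis p1_ge0 : forall y, 0 <= p1 N P y.
Hypothesis p2_ge0 : forall y, 0 <= p2 N P y.

Lemma kill_le_at g h y :
  g (target1 P y) <= h (target1 P y) -> g (target2 P y) <= h (target2 P y) ->
  kill g y <= kill h y.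
Proof.
  intros H1 H2; unfold kill.
  pose proof (Rmult_le_compat_l _ _ _ (p1_ge0 y) H1).
  pose proof (Rmult_le_compat_l _ _ _ (p2_ge0 y) H2).
  destruct state_eqb, state_eqb; lra.
Qed.

Lemma kill_iter_le n g h y :
  (forall z, g z <= h z) -> kill_iter n g y <= kill_iter n h y.
Proof.
  revert y; induction n; intros y H; simpl; auto.
  apply kill_le_at; auto.
Qed.

Lemma kill_iter_ge0 n g y : (forall z, 0 <= g z) -> 0 <= kill_iter n g y.
Proof.
  intro H.
  replace 0 with (kill_iter n (fun z => 0 * g z) y) by (rewrite kill_iter_scal; ring).
  apply kill_iter_le; intro z; specialize (H z); lra.
Qed.

Lemma kill_sum_le n g h y :
  (forall z, g z <= h z) -> kill_sum g n y <= kill_sum h n y.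
Proof.
  revert y; induction n; intros y H; simpl; [lra|].
  apply Rplus_le_compat; auto; apply kill_le_at; auto.
Qed.

Lemma survival_ge0 n y : 0 <= survival n y.
Proof. apply kill_iter_ge0; intro; lra. Qed.

Hypothesis p_sum : forall y, p1 N P y + p2 N P y = 1.

Lemma survival_S_le n y : survival (S n) y <= survival n y.
Proof.
  unfold survival; rewrite <- Nat.add_1_r, <- kill_iter_add_n.
  apply kill_iter_le; intro z; simpl; unfold kill.
  pose proof (p1_ge0 z); pose proof (p2_ge0 z); pose proof (p_sum z).
  destruct state_eqb, state_eqb; lra.
Qed.

(* [survival] is nonincreasing, so [n] of its values are all at least the last. *)
Lemma INR_mul_survival_le n y :
  INR n * survival n y <= kill_sum (fun _ => 1) n y.
Proof.
  induction n as [|n IH]; [simpl; lra|].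
  rewrite kill_sum_S, S_INR.
  pose proof (survival_S_le n y); pose proof (survival_ge0 (S n) y).
  assert (INR n * survival (S n) y <= INR n * survival n y)
    by (apply Rmult_le_compat_l; auto using pos_INR).
  unfold survival in *; lra.
Qed.

(* Dynkin's formula for the chain stopped at its first return to [x]: mass
   killed on entering [x] is booked at the value [g x]. *)
Lemma killed_dynkin g h :
  (forall y, one_step g y = g y + h y) ->
  forall n y, kill_iter n g y + g x * (1 - survival n y) = g y + kill_sum h n y.
Proof.
  intros Hg n; unfold survival; induction n as [|n IH]; intro y; simpl; [ring|].
  assert (IHz : forall z, kill_iter n g z
            = g z + kill_sum h n z - g x * (1 - kill_iter n (fun _ => 1) z))
    by (intro z; rewrite <- IH; ring).
  specialize (Hg y); pose proof (p_sum y); unfold one_step in Hg; unfold kill.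
  rewrite !IHz.
  destruct (state_eqb (target1 P y) x) eqn:E1, (state_eqb (target2 P y) x) eqn:E2;
    try apply state_eqb_true in E1; try apply state_eqb_true in E2;
    rewrite ?E1, ?E2 in Hg; nra.
Qed.

End KilledChain.

Section BoundedMartingale.
Variables (N : network) (P : policy) (x : state).
Hypothesis p1_ge0 : forall y, 0 <= p1 N P y.
Hypothesis p2_ge0 : forall y, 0 <= p2 N P y.
Hypothesis p_sum : forall y, p1 N P y + p2 N P y = 1.

Variables (f : state -> R) (d : R).
Hypothesis f_martingale : forall y, one_step N P f y = f y.
Hypothesis f_increment1 : forall y, Rabs (f (target1 P y) - f y) <= d.
Hypothesis f_increment2 : forall y, Rabs (f (target2 P y) - f y) <= d.

Local Notation kill_iter := (kill_iter N P x).
Local Notation kill_sum := (kill_sum N P x).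
Local Notation survival := (survival N P x).

Definition variance (y : state) : R := one_step N P (fun z => (f z - f y) ^ 2) y.

Definition quad_var (n : nat) : R := kill_sum variance n x.

Lemma one_step_sq a y :
  one_step N P (fun z => (f z - a) ^ 2) y = (f y - a) ^ 2 + variance y.
Proof.
  pose proof (f_martingale y); pose proof (p_sum y).
  unfold variance, one_step in *; nra.
Qed.

Lemma stopped_sq_identity a n y :
  kill_iter n (fun z => (f z - a) ^ 2) y + (f x - a) ^ 2 * (1 - survival n y)
  = (f y - a) ^ 2 + kill_sum variance n y.
Proof. apply killed_dynkin; auto; intro z; apply one_step_sq. Qed.

Lemma quad_var_kill_iter n :
  kill_iter n (fun z => (f z - f x) ^ 2) x = quad_var n.
Proof.
  pose proof (stopped_sq_identity (f x) n x).
  unfold quad_var; replace (f x - f x) with 0 in * by ring; lra.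
Qed.

Lemma hit_sq_le_kill_sum n z :
  (f z - f x) ^ 2 * (1 - survival n z) <= kill_sum variance n z.
Proof.
  pose proof (stopped_sq_identity (f z) n z).
  assert (0 <= kill_iter n (fun w => (f w - f z) ^ 2) z)
    by (apply kill_iter_ge0; auto; intro; apply pow2_ge_0).
  replace (f x - f z) with (- (f z - f x)) in * by ring.
  replace (f z - f z) with 0 in * by ring.
  rewrite <- Rsqr_pow2, <- Rsqr_neg, Rsqr_pow2 in *; lra.
Qed.

Lemma kill_iter_sq_le g (g_ge0 : forall z, 0 <= g z) m y c r :
  0 <= r -> Rabs (f y - c) <= r ->
  kill_iter m (fun z => (f z - c) ^ 2 * g z) y
  <= (r + INR m * d) ^ 2 * kill_iter m g y.
Proof.
  revert y r; induction m as [|m IH]; intros y r hr hy; cbn -[pow INR].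
  - change (INR 0) with 0; rewrite Rmult_0_l, Rplus_0_r.
    apply Rmult_le_compat_r; auto.
    rewrite <- (pow2_abs (f y - c)); apply pow_incr; auto using Rabs_pos.
  - rewrite <- kill_scal.
    assert (hd : 0 <= d) by (eapply Rle_trans; [apply Rabs_pos | apply (f_increment1 x)]).
    replace (r + INR (S m) * d) with ((r + d) + INR m * d) by (rewrite S_INR; ring).
    apply kill_le_at; auto; apply IH; try lra.
    + replace (f (target1 P y) - c) with ((f y - c) + (f (target1 P y) - f y)) by ring.
      eapply Rle_trans; [apply Rabs_triang|]; pose proof (f_increment1 y); lra.
    + replace (f (target2 P y) - c) with ((f y - c) + (f (target2 P y) - f y)) by ring.
      eapply Rle_trans; [apply Rabs_triang|]; pose proof (f_increment2 y); lra.
Qed.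

Lemma quad_var_doubling m k :
  2 * quad_var m - (INR m * d) ^ 2 * survival (m + k) x <= quad_var (m + k).
Proof.
  unfold quad_var; rewrite kill_sum_add_n; fold (quad_var m).
  assert (Hhit : kill_iter m (fun z => (f z - f x) ^ 2
                   + (-1) * ((f z - f x) ^ 2 * survival k z)) x
                 <= kill_iter m (kill_sum variance k) x).
  { apply kill_iter_le; auto; intro z; pose proof (hit_sq_le_kill_sum k z); lra. }
  rewrite kill_iter_add, kill_iter_scal, quad_var_kill_iter in Hhit; auto.
  pose proof (kill_iter_sq_le (survival k) (survival_ge0 N P x p1_ge0 p2_ge0 k)
                m x (f x) 0 (Rle_refl 0)) as Hsq.
  rewrite Rminus_diag, Rabs_R0, Rplus_0_l in Hsq.
  specialize (Hsq (Rle_refl 0)); unfold survival in Hhit, Hsq |- *.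
  rewrite kill_iter_add_n in Hsq; lra.
Qed.

Lemma quad_var_1 : quad_var 1 = variance x.
Proof. unfold quad_var; rewrite kill_sum_S; simpl; ring. Qed.

Section ShortExcursions.
Variable C : R.
Hypothesis survival_decay : forall n, INR n * survival n x <= C.

Lemma survival_eventually_small m a eps :
  0 <= a -> 0 < eps -> exists k, a * survival (m + k) x <= eps.
Proof.
  intros ha heps.
  assert (hC : 0 <= C) by (pose proof (survival_decay 0); simpl in *; lra).
  destruct (INR_archimed eps (a * C)) as [k hk]; auto.
  exists k.
  pose proof (survival_decay (m + k)) as hdec.
  pose proof (survival_ge0 N P x p1_ge0 p2_ge0 (m + k) x).
  assert (hk_le : INR k <= INR (m + k)) by (apply le_INR; lia).
  assert (hpos : 0 < INR (m + k)).
  { apply (Rlt_le_trans _ (INR k)); auto.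
    apply (Rmult_lt_reg_r eps); [lra|]; nra. }
  apply (Rmult_le_reg_l (INR (m + k))); auto.
  apply (Rmult_le_compat_l a) in hdec; auto; nra.
Qed.

Lemma quad_var_unbounded j :
  0 < variance x ->
  exists m, variance x + INR j * (variance x / 2) <= quad_var m.
Proof.
  intro hv; induction j as [|j [m hm]].
  - exists 1%nat; rewrite quad_var_1; simpl; lra.
  - destruct (survival_eventually_small m ((INR m * d) ^ 2) (variance x / 2))
      as [k hk]; [apply pow2_ge_0 | lra |].
    exists (m + k)%nat.
    pose proof (quad_var_doubling m k).
    assert (0 <= INR j * (variance x / 2)) by (apply Rmult_le_pos; [apply pos_INR | lra]).
    rewrite S_INR; lra.
Qed.

End ShortExcursions.

End BoundedMartingale.

Definition potential (l1 l2 : R) (y : state) : R := INR (fst y) / l1 - INR (snd y) / l2.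

Section CriticalNetwork.
Variables (l1 l2 : R) (P : policy).
Hypotheses (hl1 : 0 < l1) (hl2 : 0 < l2) (hni : non_idling P).

Local Notation crit := (mkNet l1 l2 l1 l2).
Local Notation f := (potential l1 l2).
Local Notation r1 := (rate1 crit P).
Local Notation r2 := (rate2 crit P).

Lemma rate1_cases y : r1 y = l1 \/ r1 y = l2.
Proof. unfold rate1; destruct (fst (P y)); auto. Qed.

Lemma rate2_cases y : r2 y = l1 \/ r2 y = l2.
Proof. unfold rate2; destruct (snd (P y)); auto. Qed.

Lemma rate1_pos y : 0 < r1 y.
Proof. destruct (rate1_cases y) as [-> | ->]; auto. Qed.

Lemma rate2_pos y : 0 < r2 y.
Proof. destruct (rate2_cases y) as [-> | ->]; auto. Qed.

(* In the critical network each operation moves the potential by the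
   reciprocal of its own rate: this is where [lam_i = mu_i] is used. *)
Lemma potential_target1 y : f (target1 P y) = f y + / r1 y.
Proof.
  destruct y as [y1 y2]; unfold potential, target1, rate1; cbn [fst snd lam1 mu2].
  destruct (P (y1, y2)) as [[] a2] eqn:E; cbn [fst snd].
  - rewrite S_INR; field; lra.
  - destruct y2 as [|y2].
    + destruct (hni y1) as [H _]; rewrite E in H; discriminate.
    + cbn [Nat.pred]; rewrite S_INR; field; lra.
Qed.

Lemma potential_target2 y : f (target2 P y) = f y - / r2 y.
Proof.
  destruct y as [y1 y2]; unfold potential, target2, rate2; cbn [fst snd lam2 mu1].
  destruct (P (y1, y2)) as [a1 []] eqn:E; cbn [fst snd].
  - rewrite S_INR; field; lra.
  - destruct y1 as [|y1].
    + destruct (hni y2) as [_ H]; rewrite E in H; discriminate.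
    + cbn [Nat.pred]; rewrite S_INR; field; lra.
Qed.

Lemma crit_p1_ge0 y : 0 <= p1 crit P y.
Proof.
  pose proof (rate1_pos y); pose proof (rate2_pos y).
  unfold p1, qout; apply Rlt_le, Rdiv_lt_0_compat; lra.
Qed.

Lemma crit_p2_ge0 y : 0 <= p2 crit P y.
Proof.
  pose proof (rate1_pos y); pose proof (rate2_pos y).
  unfold p2, qout; apply Rlt_le, Rdiv_lt_0_compat; lra.
Qed.

Lemma crit_p_sum y : p1 crit P y + p2 crit P y = 1.
Proof.
  pose proof (rate1_pos y); pose proof (rate2_pos y).
  unfold p1, p2, qout; field; lra.
Qed.

Lemma potential_martingale y : one_step crit P f y = f y.
Proof.
  pose proof (rate1_pos y); pose proof (rate2_pos y).
  unfold one_step, p1, p2, qout; rewrite potential_target1, potential_target2.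
  field; lra.
Qed.

Definition max_jump : R := / l1 + / l2.

Lemma inv_rate_le r : r = l1 \/ r = l2 -> 0 < / r <= max_jump.
Proof.
  pose proof (Rinv_0_lt_compat _ hl1); pose proof (Rinv_0_lt_compat _ hl2).
  unfold max_jump; intros [-> | ->]; lra.
Qed.

Lemma potential_increment1 y : Rabs (f (target1 P y) - f y) <= max_jump.
Proof.
  rewrite potential_target1; replace (f y + / r1 y - f y) with (/ r1 y) by ring.
  destruct (inv_rate_le _ (rate1_cases y)); rewrite Rabs_right; lra.
Qed.

Lemma potential_increment2 y : Rabs (f (target2 P y) - f y) <= max_jump.
Proof.
  rewrite potential_target2; replace (f y - / r2 y - f y) with (- / r2 y) by ring.
  destruct (inv_rate_le _ (rate2_cases y)); rewrite Rabs_Ropp, Rabs_right; lra.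
Qed.

Lemma potential_variance y :
  variance crit P f y = (/ r1 y + / r2 y) / qout crit P y.
Proof.
  pose proof (rate1_pos y); pose proof (rate2_pos y).
  unfold variance, one_step, p1, p2, qout.
  rewrite potential_target1, potential_target2; field; lra.
Qed.

Lemma potential_variance_pos y : 0 < variance crit P f y.
Proof.
  rewrite potential_variance; unfold qout.
  pose proof (rate1_pos y); pose proof (rate2_pos y).
  pose proof (Rinv_0_lt_compat _ (rate1_pos y)); pose proof (Rinv_0_lt_compat _ (rate2_pos y)).
  apply Rdiv_lt_0_compat; lra.
Qed.

Lemma potential_variance_le y :
  variance crit P f y <= 2 * max_jump * / qout crit P y.
Proof.
  rewrite potential_variance; unfold Rdiv, qout.
  pose proof (rate1_pos y); pose proof (rate2_pos y).
  destruct (inv_rate_le _ (rate1_cases y)), (inv_rate_le _ (rate2_cases y)).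
  apply Rmult_le_compat_r; [apply Rlt_le, Rinv_0_lt_compat|]; lra.
Qed.

Lemma one_le_holding_time y : 1 <= 2 * (l1 + l2) * / qout crit P y.
Proof.
  unfold qout; pose proof (rate1_pos y); pose proof (rate2_pos y).
  assert (r1 y + r2 y <= 2 * (l1 + l2))
    by (destruct (rate1_cases y) as [-> | ->], (rate2_cases y) as [-> | ->]; lra).
  rewrite <- (Rinv_r (r1 y + r2 y)) by lra.
  apply Rmult_le_compat_r; [apply Rlt_le, Rinv_0_lt_compat|]; lra.
Qed.

Lemma not_positive_recurrent x : ~ positive_recurrent crit P x.
Proof.
  intros [M HM].
  assert (kill_sum_le_M : forall c h, 0 <= c -> (forall y, h y <= c * / qout crit P y) ->
            forall n, kill_sum crit P x h n x <= c * M).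
  { intros c h hc hh n.
    eapply Rle_trans; [apply (kill_sum_le _ _ _ crit_p1_ge0 crit_p2_ge0 n _ _ x hh)|].
    rewrite kill_sum_scal, <- ret_trunc_kill_sum; apply Rmult_le_compat_l; auto. }
  assert (hdecay : forall n, INR n * survival crit P x n x <= 2 * (l1 + l2) * M).
  { intro n; eapply Rle_trans;
      [apply (INR_mul_survival_le _ _ _ crit_p1_ge0 crit_p2_ge0 crit_p_sum)|].
    apply kill_sum_le_M; [lra | apply one_le_holding_time]. }
  pose proof (potential_variance_pos x) as hv.
  destruct (INR_archimed (variance crit P f x / 2) (2 * max_jump * M)) as [j hj]; [lra|].
  destruct (quad_var_unbounded crit P x crit_p1_ge0 crit_p2_ge0 crit_p_sum f max_jump
              potential_martingale potential_increment1 potential_increment2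
              _ hdecay j hv) as [m hm].
  assert (quad_var crit P x f m <= 2 * max_jump * M).
  { apply kill_sum_le_M; [|apply potential_variance_le].
    destruct (inv_rate_le l1 (or_introl eq_refl)); lra. }
  lra.
Qed.

End CriticalNetwork.

Theorem theorem1 (l1 l2 : R) (hl1 : 0 < l1) (hl2 : 0 < l2) :
  ~ stabilizable (mkNet l1 l2 l1 l2).
Proof.
  intros [P [hni [x [Hpr _]]]].
  apply (not_positive_recurrent l1 l2 P hl1 hl2 hni x), Hpr.
  split; apply rt_refl.
Qed.
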